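(* Fix $\alpha\in[0,1]$ and let $f:[0,1]\to[0,1]$ satisfy $\left(1-\int_0^x\frac{dx'}{f(x')}\right)f(x)\le\alpha$ for all $x\in[0,1]$. Then $\int_0^{\alpha\log(1/\alpha)}\frac{dx}{f(x)}\ge 1-\alpha$.
   Context: $\log$ denotes the natural logarithm. *)

From HB Require Import structures.
From mathcomp Require Import all_boot all_order all_algebra.
From mathcomp Require Import all_classical all_reals all_analysis.
Set Implicit Arguments. Unset Strict Implicit. Unset Printing Implicit Defensive.
Import Order.TTheory GRing.Theory Num.Theory.
Local Open Scope ring_scope.
Local Open Scope classical_set_scope.
Local Open Scope ereal_scope.

(* F f x = \int_0^x dx'/f(x') as an extended real (1/0 := +oo, via inve). *)
Definition recip_int (R : realType) (f : R -> R) (x : R) : \bar R :=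
  \int[lebesgue_measure]_(t in `[0%R, x]) ((f t)%:E)^-1.

(* Write F x for \int_0^x dt / f t and u := 1 - F.  Since F is nondecreasing,
   the hypothesis gives 1 / f t >= u y / alpha for every t <= y, and integrating
   over ]x, y] yields u y * (1 + (y - x) / alpha) <= u x.  Iterating this on a
   grid of mesh a / n of [0, a], with a = alpha * ln (1 / alpha), gives
   u a * (1 + ln (1 / alpha) / n) ^ n <= u 0 <= 1, and letting n grow,
   u a <= exp (- ln (1 / alpha)) = alpha. *)

From HB Require Import structures.
From mathcomp Require Import all_boot all_order all_algebra.
From mathcomp Require Import all_classical all_reals all_analysis measurable_realfun.
From mathcomp Require Import ring lra.
Import Order.TTheory GRing.Theory Num.Theory.
Local Open Scope ring_scope.
Local Open Scope classical_set_scope.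

Section exponential_bounds.
Context {R : realType}.
Implicit Types (x y L v : R) (n : nat).

Lemma ln1Dx_ge x : -1 < x -> x / (1 + x) <= ln (1 + x).
Proof.
move=> x_gtN1; have x1_gt0 : 0 < 1 + x by lra.
have x1V : 1 + - x / (1 + x) = (1 + x)^-1 by field; rewrite gt_eqF.
have : 0 < (1 + x)^-1 by rewrite invr_gt0.
rewrite -x1V => x1V_gt0; have x1V_gtN1 : -1 < - x / (1 + x) by lra.
have := le_ln1Dx x1V_gtN1; rewrite x1V lnV ?posrE //; lra.
Qed.

Lemma expR_le_pow1D x n : -1 < x -> expR (n%:R * (x / (1 + x))) <= (1 + x) ^+ n.
Proof.
move=> x_gtN1; have x1_gt0 : 0 < 1 + x by lra.
rewrite -[X in _ <= X]lnK ?posrE ?exprn_gt0 // lnXn // ler_expR.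
by rewrite -[X in _ <= X]mulr_natl ler_wpM2l // ln1Dx_ge.
Qed.

Lemma le_expRN_of_pow v L : 0 <= L ->
  (forall n, (0 < n)%N -> v * (1 + L / n%:R) ^+ n <= 1) -> v <= expR (- L).
Proof.
move=> L_ge0 hv; rewrite leNgt; apply/negP => ltv.
pose w := v * expR L.
have w_gt1 : 1 < w by rewrite /w -ltr_pdivrMr ?expR_gt0 // div1r -expRN.
have lnw_gt0 : 0 < ln w by exact: ln_gt0.
(* Since (1 + L/n)^n >= exp (L - L^2/(n + L)), the hypothesis at n forces
   ln w <= L^2/(n + L), which fails once n > L^2 / ln w. *)
pose n := (Num.Def.archi_bound (L ^+ 2 / ln w)).+1.
have n_gt : L ^+ 2 / ln w < n%:R.
  apply: lt_le_trans (archi_boundP _) _; last by rewrite ler_nat.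
  by apply: divr_ge0; [exact: sqr_ge0 | exact: ltW].
have nR_gt0 : 0 < n%:R :> R by rewrite ltr0n.
have y_gtN1 : -1 < L / n%:R by have := divr_ge0 L_ge0 (ltW nR_gt0); lra.
have v_ge0 : 0 <= v by apply: ltW; apply: lt_trans ltv; exact: expR_gt0.
have {}hv := le_trans (ler_wpM2l v_ge0 (@expR_le_pow1D _ n y_gtN1)) (hv n isT).
have En : n%:R * (L / n%:R / (1 + L / n%:R)) = L - L ^+ 2 / (n%:R + L).
  by field; rewrite !gt_eqF //; lra.
rewrite En in hv.
have : w <= expR (L ^+ 2 / (n%:R + L)).
  by move: hv; rewrite expRB mulrA ler_pdivrMr ?expR_gt0 // mul1r.
rewrite -[w]lnK ?posrE; last lra.
rewrite ler_expR leNgt => /negP; apply.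
rewrite ltr_pdivrMr; last lra.
move: n_gt; rewrite ltr_pdivrMr // => n_gt.
have : 0 <= ln w * L by apply: mulr_ge0 => //; exact: ltW.
lra.
Qed.

Lemma mul_lnV_le1 x : 0 < x -> x * ln x^-1 <= 1.
Proof.
move=> x_gt0; rewrite -(mulfV (lt0r_neq0 x_gt0)) ler_pM2l //.
by apply/ltW/ln_sublinear; rewrite invr_gt0.
Qed.

Lemma discrete_gronwall (u : R -> R) (a c : R) n : 0 <= a -> 0 <= c -> (0 < n)%N ->
  (forall x y, 0 <= x -> x <= y -> y <= a -> u y * (1 + c * (y - x)) <= u x) ->
  u a * (1 + c * a / n%:R) ^+ n <= u 0.
Proof.
move=> a_ge0 c_ge0 n_gt0 hu; have nR_gt0 : 0 < n%:R :> R by rewrite ltr0n.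
pose x k := a * k%:R / n%:R.
have h_ge0 : 0 <= c * a / n%:R by rewrite divr_ge0 ?mulr_ge0 // ltW.
suff /(_ n (leqnn n)) : forall k, (k <= n)%N -> u (x k) * (1 + c * a / n%:R) ^+ k <= u 0.
  by rewrite /x mulfK ?gt_eqF.
elim=> [|k IHk] le_kn; first by rewrite /x mulr0 mul0r expr0 mulr1.
have xk_ge0 : 0 <= x k by rewrite /x divr_ge0 ?mulr_ge0 // ltW.
have step : x k.+1 - x k = a / n%:R by rewrite /x -natr1; field; rewrite gt_eqF.
have le_xk : x k <= x k.+1 by rewrite -subr_ge0 step divr_ge0 // ltW.
have xk1_le : x k.+1 <= a by rewrite /x ler_pdivrMr // ler_wpM2l // ler_nat.
have h1_ge0 : 0 <= 1 + c * a / n%:R by lra.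
have := hu _ _ xk_ge0 le_xk xk1_le; rewrite step mulrA.
move=> /(ler_wpM2r (exprn_ge0 k h1_ge0)); rewrite -(mulrA (u _)) -exprS => le_k1.
exact: le_trans le_k1 (IHk (ltnW le_kn)).
Qed.
End exponential_bounds.

Local Open Scope ereal_scope.

Lemma measurable_fun_inve_ge0 d (T : measurableType d) (R : realType) (D : set T)
    (f : T -> R) : measurable D -> measurable_fun D f ->
  (forall t, D t -> (0 <= f t)%R) -> measurable_fun D (fun t => (f t)%:E^-1 : \bar R).
Proof.
move=> mD mf f_ge0.
pose h x : \bar R := if x == 0%R then +oo else (x `^ (-1))%:E.
have mh : measurable_fun setT h.
  apply: measurable_fun_ifT => //; first exact: measurable_fun_eqr.
  by apply/measurable_EFinP; exact: measurable_powR.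
apply: eq_measurable_fun (measurableT_comp mh mf) => t /[!inE] /f_ge0 ft_ge0.
by rewrite /h inver /=; case: eqP => // _; rewrite powR_inv1.
Qed.

Section integral_itv.
Context {R : realType} {a b : R} {g : R -> \bar R}.
Hypothesis mg : measurable_fun `[a, b] g.
Hypothesis g_ge0 : forall t, (a <= t <= b)%R -> 0 <= g t.
Local Notation mu := (@lebesgue_measure R).

Lemma integral_itv_splitr x y : (a <= x)%R -> (x <= y)%R -> (y <= b)%R ->
  \int[mu]_(t in `[a, y]) g t =
  \int[mu]_(t in `[a, x]) g t + \int[mu]_(t in `]x, y]) g t.
Proof.
move=> ax xy yb.
have itvE : `[a, y] = `[a, x] `|` `]x, y] :> set R.
  by rewrite -itv_bndbnd_setU // bnd_simp.
rewrite itvE ge0_integral_setU //.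
- by apply: measurable_funS mg => // t; rewrite -itvE /= !in_itv /=; lra.
- by move=> t; rewrite -itvE /= in_itv /= => /andP[? ?]; apply: g_ge0; lra.
- by apply/disj_setPS => t [] /=; rewrite !in_itv /=; lra.
Qed.

Lemma le_integral_itv x y : (a <= x)%R -> (x <= y)%R -> (y <= b)%R ->
  \int[mu]_(t in `[a, x]) g t <= \int[mu]_(t in `[a, y]) g t.
Proof.
move=> ax xy yb; rewrite (integral_itv_splitr x y ax xy yb) leeDl //.
by apply: integral_ge0 => t; rewrite /= in_itv /= => /andP[? ?]; apply: g_ge0; lra.
Qed.

Lemma integral_itv_ge_cst x y c : (a <= x)%R -> (x <= y)%R -> (y <= b)%R ->
  (forall t, (x < t <= y)%R -> c%:E <= g t) ->
  (c * (y - x))%:E <= \int[mu]_(t in `]x, y]) g t.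
Proof.
move=> ax xy yb g_ge_c.
have [c_le0|c_gt0] := lerP c 0.
  apply: (@le_trans _ _ 0); first by rewrite lee_fin mulr_le0_ge0 // subr_ge0.
  by apply: integral_ge0 => t; rewrite /= in_itv /= => /andP[? ?]; apply: g_ge0; lra.
apply: (@le_trans _ _ (\int[mu]_(t in `]x, y]) c%:E)).
  rewrite integral_cst //= lebesgue_measure_itv /= lte_fin.
  move: xy; rewrite le_eqVlt => /predU1P[<-|->]; last by rewrite -EFinD -EFinM.
  by rewrite ltxx subrr mulr0 mule0.
apply: ge0_le_integral => //.
- by move=> t _; rewrite lee_fin ltW.
- by apply: measurable_funS mg => // t; rewrite /= !in_itv /=; lra.
Qed.
End integral_itv.

Section reciprocal_integral.
Context {R : realType} {alpha : R} {f : R -> R}.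
Hypothesis alpha_gt0 : (0 < alpha)%R.
Hypothesis mf : measurable_fun (`[0%R, 1%R] : set R) f.
Hypothesis f_ge0 : forall x, (0 <= x <= 1)%R -> (0 <= f x)%R.
Hypothesis hcond : forall x, (0 <= x <= 1)%R ->
  (1 - recip_int f x) * (f x)%:E <= alpha%:E.

Local Notation F := (recip_int f).

Let mg : measurable_fun (`[0%R, 1%R] : set R) (fun t => (f t)%:E^-1 : \bar R).
Proof. exact: measurable_fun_inve_ge0. Qed.

Let g_ge0 t : (0 <= t <= 1)%R -> 0 <= (f t)%:E^-1.
Proof. by move/f_ge0; rewrite inve_ge0 lee_fin. Qed.

Lemma recip_int_ge0 x : (0 <= x <= 1)%R -> 0 <= F x.
Proof.
move=> /andP[x_ge0 x_le1]; apply: integral_ge0 => t.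
by rewrite /= in_itv /= => /andP[? ?]; apply: g_ge0; lra.
Qed.

Lemma le_recip_int x y : (0 <= x)%R -> (x <= y)%R -> (y <= 1)%R -> F x <= F y.
Proof. exact: le_integral_itv. Qed.

Lemma recip_int_fin_num x y : (0 <= x)%R -> (x <= y)%R -> (y <= 1)%R ->
  F y \is a fin_num -> F x \is a fin_num.
Proof.
move=> x_ge0 xy y_le1.
have Fx_ge0 : 0 <= F x by apply: recip_int_ge0; lra.
have Fy_ge0 : 0 <= F y by apply: recip_int_ge0; lra.
rewrite !ge0_fin_numE //; exact/le_lt_trans/le_recip_int.
Qed.

Lemma inve_f_ge t y : (0 <= t)%R -> (t <= y)%R -> (y <= 1)%R -> F y \is a fin_num ->
  ((1 - fine (F y)) / alpha)%:E <= (f t)%:E^-1.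
Proof.
move=> t_ge0 ty y_le1 Fy_fin.
have t01 : (0 <= t <= 1)%R by lra.
have Ft_fin := recip_int_fin_num t y t_ge0 ty y_le1 Fy_fin.
have Fty : (fine (F t) <= fine (F y))%R.
  by rewrite -lee_fin !fineK //; exact: le_recip_int.
have := hcond t t01; rewrite -(fineK Ft_fin) -EFinB -EFinM lee_fin => cond_t.
rewrite inver; case: eqP => [_|/eqP ft_neq0]; first exact: leey.
have ft_gt0 : (0 < f t)%R by rewrite lt_neqAle eq_sym ft_neq0 f_ge0.
rewrite lee_fin ler_pdivrMr // mulrC ler_pdivlMr //.
have : (0 <= (fine (F y) - fine (F t)) * f t)%R.
  by apply: mulr_ge0; [rewrite subr_ge0 | exact: ltW].
lra.
Qed.

Lemma recip_int_step x y : (0 <= x)%R -> (x <= y)%R -> (y <= 1)%R ->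
  F y \is a fin_num ->
  ((1 - fine (F y)) * (1 + alpha^-1 * (y - x)) <= 1 - fine (F x))%R.
Proof.
move=> x_ge0 xy y_le1 Fy_fin.
have Fx_fin := recip_int_fin_num x y x_ge0 xy y_le1 Fy_fin.
have Fxy : F y = F x + \int[lebesgue_measure]_(t in `]x, y]) (f t)%:E^-1.
  exact: integral_itv_splitr mg g_ge0 x y x_ge0 xy y_le1.
have := integral_itv_ge_cst mg g_ge0 x y ((1 - fine (F y)) / alpha) x_ge0 xy y_le1.
have Fy_bound t : (x < t <= y)%R -> ((1 - fine (F y)) / alpha)%:E <= (f t)%:E^-1.
  by move=> /andP[xt ty]; apply: inve_f_ge => //; lra.
move=> /(_ Fy_bound) /(leeD2l (F x)); rewrite -Fxy.
rewrite -(fineK Fx_fin) -(fineK Fy_fin) -EFinD lee_fin /=; lra.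
Qed.
End reciprocal_integral.

Theorem lemma7 (R : realType) (alpha : R) (f : R -> R)
  (halpha0 : (0 < alpha)%R) (halpha1 : (alpha <= 1)%R)
  (hfm : measurable_fun (`[0%R, 1%R] : set R) f)
  (hf01 : forall x : R, (0 <= x <= 1)%R -> (0 <= f x <= 1)%R)
  (hcond : forall x : R, (0 <= x <= 1)%R ->
     (1 - recip_int f x) * (f x)%:E <= alpha%:E) :
  recip_int f (alpha * ln (alpha^-1))%R >= (1 - alpha)%:E.
Proof.
have f_ge0 x : (0 <= x <= 1)%R -> (0 <= f x)%R by move=> /hf01 /andP[].
set L := ln alpha^-1; set a := (alpha * L)%R.
have L_ge0 : (0 <= L)%R by rewrite ln_ge0 // invf_ge1.
have a_ge0 : (0 <= a)%R by rewrite mulr_ge0 // ltW.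
have a_le1 : (a <= 1)%R by exact: mul_lnV_le1.
have [->|/negPf Fa_ninfty] := eqVneq (recip_int f a) +oo; first exact: leey.
have Fa_fin : recip_int f a \is a fin_num.
  by rewrite ge0_fin_numE ?ltey ?Fa_ninfty // (recip_int_ge0 f_ge0) ?a_ge0 ?a_le1.
pose u x := (1 - fine (recip_int f x))%R.
have u0_le1 : (u 0 <= 1)%R.
  by rewrite /u lerBlDr lerDl fine_ge0 // (recip_int_ge0 f_ge0) ?lexx ?ler01.
have u_step x y : (0 <= x)%R -> (x <= y)%R -> (y <= a)%R ->
    (u y * (1 + alpha^-1 * (y - x)) <= u x)%R.
  move=> x_ge0 xy ya; have y_le1 : (y <= 1)%R by lra.
  apply: (recip_int_step halpha0 hfm f_ge0 hcond) => //.
  by apply: (recip_int_fin_num hfm f_ge0 y a) => //; lra.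
have : (u a <= expR (- L))%R.
  apply: le_expRN_of_pow => // n n_gt0; apply: le_trans u0_le1.
  rewrite -[X in (1 + X / _)%R](mulKf (lt0r_neq0 halpha0)).
  by apply: discrete_gronwall => //; rewrite invr_ge0 ltW.
rewrite /L lnV ?posrE // opprK lnK ?posrE // /u.
move=> ua_le; rewrite -(fineK Fa_fin) lee_fin; lra.
Qed.
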